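(* Let $G$ be a graph, $t\ge 2$ an integer and $k$ a nonnegative integer. For a set of vertices $X$, let $E_X$ denote the set of all pairs $\{u,v\}$ with $u,v\in X$, $u\neq v$. Let $\mathcal{F}'$ be a family of sets of the form $E_Z$ with $Z\subseteq V(G)$, such that for every edge $\{x,y\}$ of $G$, the family $\mathcal{F}'_{xy}=\{X\subseteq V(G)\setminus\{x,y\} : E_{X\cup\{x,y\}}\in\mathcal{F}'\}$ satisfies $|\mathcal{F}'_{xy}|\le 2\cdot(t-2)!\cdot k^{t-2}$. If $|\mathcal{F}'|>2\cdot(t-2)!\cdot k^{t-1}$, then $\mathcal{F}'$ has no hitting set consisting of at most $k$ edges of $G$.
   Context: A set $S$ is a hitting set of a family $\mathcal{F}$ of sets if $S\cap F\neq\emptyset$ for every $F\in\mathcal{F}$. (In the paper this is phrased as: after exhaustively applying the sunflower reduction rule, so that $|\mathcal{F}'_{xy}|\le 2(t-2)!k^{t-2}$ for every edge, the rule ''if $|\mathcal{F}'|>2(t-2)!k^{t-1}$, return a fixed no-instance'' is safe.) *)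

From mathcomp Require Import all_boot.
Set Implicit Arguments. Unset Strict Implicit. Unset Printing Implicit Defensive.

Definition pairs (T : finType) (X : {set T}) : {set {set T}} :=
  [set p : {set T} | (p \subset X) && (#|p| == 2)].

Definition edges (T : finType) (e : rel T) : {set {set T}} :=
  [set p : {set T} | [exists x, exists y, e x y && (p == [set x; y])]].

Definition link (T : finType) (F : {set {set {set T}}}) (x y : T) : {set {set T}} :=
  [set X : {set T} | (X \subset ~: [set x; y]) && (pairs (X :|: [set x; y]) \in F)].

Definition is_hitting_set (T : finType) (S : {set {set T}}) (F : {set {set {set T}}}) :=
  forall A, A \in F -> S :&: A != set0.

(** The edge sets of the cliques in F' that contain a fixed edge {x, y} are
    the images of the link F'_{xy} under X |-> E_{X ∪ {x,y}}, so there are at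
    most 2 (t-2)! k^(t-2) of them.  Every member of F' contains an edge of a
    hitting set S, hence |F'| <= |S| * 2 (t-2)! k^(t-2) <= 2 (t-2)! k^(t-1). *)

From mathcomp Require Import all_boot.

Lemma leq_card_bigcup {T I : finType} (P : {set I}) (G : I -> {set T}) :
  #|\bigcup_(i in P) G i| <= \sum_(i in P) #|G i|.
Proof.
apply: (big_ind2 (fun (A : {set T}) n => #|A| <= n)) => [|A a B b leA leB|//].
- by rewrite cards0.
- exact: leq_trans (leq_card_setU A B) (leq_add leA leB).
Qed.

Lemma card_le_sum_hitting {U : finType} {S : {set U}} {F : {set {set U}}} :
  (forall A, A \in F -> S :&: A != set0) ->
  #|F| <= \sum_(p in S) #|[set A in F | p \in A]|.
Proof.
move=> hitS.
apply: leq_trans _ (leq_card_bigcup S (fun p => [set A in F | p \in A])).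
apply/subset_leq_card/subsetP => A FA.
have /set0Pn [p /setIP [Sp Ap]] := hitS A FA.
by apply/bigcupP; exists p; rewrite // inE FA.
Qed.

Lemma card_cliques_through_le_link {T : finType} {F : {set {set {set T}}}}
    (x y : T) :
  (forall A, A \in F -> exists Z : {set T}, A = pairs Z) ->
  #|[set A in F | [set x; y] \in A]| <= #|link F x y|.
Proof.
move=> cliqueF; set xy := [set x; y].
apply: leq_trans _ (leq_imset_card (fun X => pairs (X :|: xy)) _).
apply/subset_leq_card/subsetP => A; rewrite inE => /andP [FA xyA].
have [Z defA] := cliqueF A FA.
have xyZ : xy \subset Z by move: xyA; rewrite defA inE => /andP [].
have defZ : (Z :\: xy) :|: xy = Z by rewrite -[RHS](setID Z xy) (setIidPr xyZ) setUC.
apply/imsetP; exists (Z :\: xy); last by rewrite defZ defA.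
by rewrite inE subsetDr defZ -defA FA.
Qed.

Theorem lemma3 (T : finType) (e : rel T) (e_sym : symmetric e)
  (e_irr : irreflexive e) (t k : nat) (F : {set {set {set T}}})
  (Ht : 2 <= t)
  (HF : forall A, A \in F -> exists Z : {set T}, A = pairs Z)
  (Hlink : forall x y : T, e x y -> #|link F x y| <= 2 * (t - 2)`! * k ^ (t - 2))
  (Hbig : 2 * (t - 2)`! * k ^ (t - 1) < #|F|) :
  ~ (exists S : {set {set T}},
       [/\ S \subset edges e, #|S| <= k & is_hitting_set S F]).
Proof.
move=> [S [Se Sk hitS]].
set B := 2 * (t - 2)`! * k ^ (t - 2).
have throughB p : p \in S -> #|[set A in F | p \in A]| <= B.
  move/(subsetP Se); rewrite inE => /existsP [x /existsP [y /andP [exy /eqP ->]]].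
  exact: leq_trans (card_cliques_through_le_link x y HF) (Hlink _ _ exy).
have cardF : #|F| <= #|S| * B.
  apply: leq_trans (card_le_sum_hitting hitS) _.
  by rewrite -sum1_card big_distrl /=; apply: leq_sum => p /throughB; rewrite mul1n.
have kB : 2 * (t - 2)`! * k ^ (t - 1) = k * B.
  by rewrite /B -[t - 1]/(t.+1 - 2) subSn // expnS mulnCA.
have := leq_trans cardF (leq_mul Sk (leqnn B)).
by rewrite -kB leqNgt Hbig.
Qed.
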